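(* Let $R$ be an associative ring with a derivation $'$. Suppose $u_n,v_n\in R$ ($n\in\mathbb{Z}$) satisfy $$u_n'=v_{n+1}u_n-u_nv_n,\qquad v_n'=u_nv_n-v_nu_{n-1}\qquad(n\in\mathbb{Z}).$$ Then $a_n:=u_n+v_n$ and $b_n:=v_nu_{n-1}$ satisfy $$a_n'=b_{n+1}-b_n,\qquad b_n'=a_nb_n-b_na_{n-1}\qquad(n\in\mathbb{Z}).$$
   Context: The system for $(u_n,v_n)$ is the non-abelian Volterra lattice $\gamma_n'=\gamma_{n+1}\gamma_n-\gamma_n\gamma_{n-1}$ written with $u_k=\gamma_{2k+1}$, $v_k=\gamma_{2k}$; the system for $(a_n,b_n)$ is equivalent to the non-abelian 1d Toda lattice when $a_n=\theta_n'\theta_n^{-1}$, $b_n=\theta_n\theta_{n-1}^{-1}$. *)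

From HB Require Import structures.
From mathcomp Require Import all_boot all_order all_algebra.
Set Implicit Arguments. Unset Strict Implicit. Unset Printing Implicit Defensive.
Import GRing.Theory.
Local Open Scope ring_scope.

Definition is_derivation (R : pzRingType) (d : R -> R) : Prop :=
  (forall x y : R, d (x + y) = d x + d y) /\
  (forall x y : R, d (x * y) = d x * y + x * d y).

From HB Require Import structures.
From mathcomp Require Import all_boot all_order all_algebra.
Local Open Scope ring_scope.
Import GRing.Theory.

(* With a_n = u_n + v_n the Volterra equations telescope: the cross terms
   u_n v_n cancel in a_n', leaving b_(n+1) - b_n.  For b_n = v_n u_(n-1) the
   Leibniz rule gives four monomials, which are exactly those of
   a_n b_n - b_n a_(n-1) in a noncommutative ring. *)

Section VolterraToToda.

Variables (R : pzRingType) (d : R -> R) (u v : int -> R).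
Hypothesis derivD : forall x y : R, d (x + y) = d x + d y.
Hypothesis derivM : forall x y : R, d (x * y) = d x * y + x * d y.
Hypothesis derive_u : forall n : int, d (u n) = v (n + 1) * u n - u n * v n.
Hypothesis derive_v : forall n : int, d (v n) = u n * v n - v n * u (n - 1).

Lemma derive_volterra_sum (n : int) :
  d (u n + v n) = v (n + 1) * u n - v n * u (n - 1).
Proof. by rewrite derivD derive_u derive_v addrA subrK. Qed.

Lemma derive_volterra_product (n : int) :
  d (v n * u (n - 1)) =
    (u n + v n) * (v n * u (n - 1)) - v n * u (n - 1) * (u (n - 1) + v (n - 1)).
Proof.
rewrite derivM derive_u derive_v subrK.
rewrite mulrBl mulrBr mulrDl mulrDr !mulrA opprD.
by rewrite addrACA.
Qed.

End VolterraToToda.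

Theorem proposition5p3 (R : pzRingType) (d : R -> R) (u v : int -> R) :
  is_derivation d ->
  (forall n : int, d (u n) = v (n + 1) * u n - u n * v n) ->
  (forall n : int, d (v n) = u n * v n - v n * u (n - 1)) ->
  let a := fun n : int => u n + v n in
  let b := fun n : int => v n * u (n - 1) in
  (forall n : int, d (a n) = b (n + 1) - b n) /\
  (forall n : int, d (b n) = a n * b n - b n * a (n - 1)).
Proof.
move=> [derivD derivM] derive_u derive_v a b; split=> n.
- by rewrite /a /b derive_volterra_sum // addrK.
- exact: derive_volterra_product.
Qed.
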